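(* Let $H=(v_1,\dots,v_6)$ be an embedded equilateral hexagon, considered up to translations and rotations, whose action-angle coordinates $(d_1,d_2,d_3,\theta_1,\theta_2,\theta_3)$ for the $T_{135}$ triangulation are defined. If $J(H)=(1,1)$, then $\theta_i\in(0,\pi)$ for all $i\in\{1,2,3\}$, and $\theta_1+\theta_2<\pi$, $\theta_1+\theta_3<\pi$, $\theta_2+\theta_3<\pi$.
   Context: An equilateral hexagon is an ordered 6-tuple $H=(v_1,\dots,v_6)$ in $\mathbb{R}^3$ with $\|v_i-v_{i+1}\|=1$ (indices mod 6), edges $e_i=[v_i,v_{i+1}]$, oriented $v_1\to v_2\to\cdots\to v_6\to v_1$; embedded means non-adjacent edges are disjoint and adjacent ones meet only at their common endpoint. Standard position: $v_1=0$, $v_3$ on the positive $x$-axis, $v_5$ in the $xy$-plane with positive $y$-coordinate. Action-angle coordinates ($T_{135}$ triangulation), defined when $v_1,v_3,v_5$ are not collinear and $0<d_i<2$: $d_1=\|v_3-v_1\|$, $d_2=\|v_5-v_3\|$, $d_3=\|v_1-v_5\|$; with $m_1,m_2,m_3$ the midpoints of $[v_1,v_3],[v_3,v_5],[v_5,v_1]$, $u_1,u_2,u_3$ the unit vectors in the $xy$-plane perpendicular to these segments pointing toward the opposite vertex of triangle $v_1v_3v_5$ (toward $v_5,v_1,v_3$ respectively), and $e_z=(0,0,1)$, the angles $\theta_i\in[0,2\pi)$ are determined by $v_{2i}=m_i+\tfrac12\sqrt{4-d_i^2}(\cos\theta_i\,u_i+\sin\theta_i\,e_z)$ (regular planar hexagon: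 all $\theta_i=\pi$). Joint Chirality-Curl: $curl(H)=\operatorname{sign}\big((v_3-v_1)\times(v_5-v_1)\cdot(v_2-v_1)\big)$. For $i=2,4,6$, $T_i$ is the open triangular disk with vertices $v_{i-1},v_i,v_{i+1}$, oriented by the right-hand rule (normal $(v_i-v_{i-1})\times(v_{i+1}-v_i)$), and $\Delta_i$ is the algebraic intersection number of $T_i$ with the oriented polygon $H$. Then $J(H)=(\Delta_2\Delta_4\Delta_6,\ \Delta_2^2\Delta_4^2\Delta_6^2\,curl(H))$. *)

From Stdlib Require Import Reals Lra ZArith ClassicalEpsilon.
Open Scope R_scope.

Record vec3 : Type := V3 { vx : R; vy : R; vz : R }.

Definition vadd (a b : vec3) : vec3 := V3 (vx a + vx b) (vy a + vy b) (vz a + vz b).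
Definition vsub (a b : vec3) : vec3 := V3 (vx a - vx b) (vy a - vy b) (vz a - vz b).
Definition vscale (k : R) (a : vec3) : vec3 := V3 (k * vx a) (k * vy a) (k * vz a).
Definition dot (a b : vec3) : R := vx a * vx b + vy a * vy b + vz a * vz b.
Definition cross (a b : vec3) : vec3 :=
  V3 (vy a * vz b - vz a * vy b) (vz a * vx b - vx a * vz b) (vx a * vy b - vy a * vx b).
Definition vnorm (a : vec3) : R := sqrt (dot a a).
Definition dist (a b : vec3) : R := vnorm (vsub a b).
Definition origin : vec3 := V3 0 0 0.
Definition e_z : vec3 := V3 0 0 1.
Definition midpoint (a b : vec3) : vec3 := vscale (1/2) (vadd a b).

Definition on_segment (p a b : vec3) : Prop :=
  exists t, 0 <= t <= 1 /\ p = vadd a (vscale t (vsub b a)).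

Definition in_open_triangle (p a b c : vec3) : Prop :=
  exists al be ga, 0 < al /\ 0 < be /\ 0 < ga /\ al + be + ga = 1 /\
    p = vadd (vscale al a) (vadd (vscale be b) (vscale ga c)).

Record hexagon : Type := Hex { h1 : vec3; h2 : vec3; h3 : vec3; h4 : vec3; h5 : vec3; h6 : vec3 }.

Definition vtx (H : hexagon) (i : nat) : vec3 :=
  match (i mod 6)%nat with
  | 1%nat => h1 H | 2%nat => h2 H | 3%nat => h3 H
  | 4%nat => h4 H | 5%nat => h5 H | _ => h6 H
  end.

Definition on_edge (H : hexagon) (i : nat) (p : vec3) : Prop :=
  on_segment p (vtx H i) (vtx H (S i)).

Definition equilateral (H : hexagon) : Prop :=
  forall i : nat, (1 <= i <= 6)%nat -> dist (vtx H i) (vtx H (S i)) = 1.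

Definition embedded (H : hexagon) : Prop :=
  (forall i j : nat, (1 <= i <= 6)%nat -> (1 <= j <= 6)%nat -> i <> j ->
      (j mod 6 <> S i mod 6)%nat -> (i mod 6 <> S j mod 6)%nat ->
      forall p, ~ (on_edge H i p /\ on_edge H j p)) /\
  (forall i : nat, (1 <= i <= 6)%nat ->
      forall p, on_edge H i p -> on_edge H (S i) p -> p = vtx H (S i)).

Definition Rsign (x : R) : Z :=
  if Rlt_dec 0 x then 1%Z else if Rlt_dec x 0 then (-1)%Z else 0%Z.

Definition curl (H : hexagon) : Z :=
  let v1 := vtx H 1 in
  Rsign (dot (cross (vsub (vtx H 3) v1) (vsub (vtx H 5) v1)) (vsub (vtx H 2) v1)).

(** Contribution of the oriented edge [a -> b] to the algebraic intersection
    number with the open triangle T = (p,q,r), oriented by the normal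
    N = (q - p) x (r - q).  With f(x) = (x - q).N the signed height, the edge
    contributes +1 if it goes from f<0 to f>=0 and -1 if from f>=0 to f<0,
    provided the point where it meets the plane of T lies in the open disk T.
    (Half-open convention: it agrees with the count of transverse crossings in
    general position, and counts a vertex of H lying in T correctly.) *)
Definition edge_contrib (a b p q r : vec3) : Z :=
  let N := cross (vsub q p) (vsub r q) in
  let fa := dot (vsub a q) N in
  let fb := dot (vsub b q) N in
  let x := vadd a (vscale (fa / (fa - fb)) (vsub b a)) in
  if excluded_middle_informative (in_open_triangle x p q r) then
    (if Rlt_dec fa 0 then (if Rle_dec 0 fb then 1%Z else 0%Z)
     else (if Rlt_dec fb 0 then (-1)%Z else 0%Z))
  else 0%Z.

(** Delta_i: algebraic intersection number of T_i = (v_{i-1}, v_i, v_{i+1})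
    with the oriented polygon H (sum over its six oriented edges). *)
Definition Delta (H : hexagon) (i : nat) : Z :=
  let p := vtx H (i + 5) in
  let q := vtx H i in
  let r := vtx H (S i) in
  (edge_contrib (vtx H 1) (vtx H 2) p q r + edge_contrib (vtx H 2) (vtx H 3) p q r +
   edge_contrib (vtx H 3) (vtx H 4) p q r + edge_contrib (vtx H 4) (vtx H 5) p q r +
   edge_contrib (vtx H 5) (vtx H 6) p q r + edge_contrib (vtx H 6) (vtx H 1) p q r)%Z.

Definition J (H : hexagon) : Z * Z :=
  ((Delta H 2 * Delta H 4 * Delta H 6)%Z,
   (Delta H 2 ^ 2 * Delta H 4 ^ 2 * Delta H 6 ^ 2 * curl H)%Z).

Definition standard_position (H : hexagon) : Prop :=
  vtx H 1 = origin /\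
  0 < vx (vtx H 3) /\ vy (vtx H 3) = 0 /\ vz (vtx H 3) = 0 /\
  vz (vtx H 5) = 0 /\ 0 < vy (vtx H 5).

Definition diag (H : hexagon) (i : nat) : R :=
  dist (vtx H (2 * i + 1)) (vtx H (2 * i - 1)).

Definition perp_toward (a b o : vec3) : vec3 :=
  let w := V3 (- (vy b - vy a)) (vx b - vx a) 0 in
  let s := if Rlt_dec 0 (dot w (vsub o (midpoint a b))) then 1 else -1 in
  vscale (s / vnorm w) w.

Definition mid_i (H : hexagon) (i : nat) : vec3 :=
  midpoint (vtx H (2 * i - 1)) (vtx H (2 * i + 1)).
Definition u_i (H : hexagon) (i : nat) : vec3 :=
  perp_toward (vtx H (2 * i - 1)) (vtx H (2 * i + 1)) (vtx H (2 * i + 3)).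

Definition aa_defined (H : hexagon) : Prop :=
  cross (vsub (vtx H 3) (vtx H 1)) (vsub (vtx H 5) (vtx H 1)) <> origin /\
  (forall i : nat, (1 <= i <= 3)%nat -> 0 < diag H i < 2).

Definition is_angle (H : hexagon) (i : nat) (theta : R) : Prop :=
  0 <= theta < 2 * PI /\
  vtx H (2 * i) =
    vadd (mid_i H i)
      (vscale (/2 * sqrt (4 - diag H i ^ 2))
         (vadd (vscale (cos theta) (u_i H i)) (vscale (sin theta) e_z))).

(* In standard position v1, v3, v5 span the plane z = 0, and the even vertex v_2i is the
   apex of a "wing" over the diagonal [v_2i-1, v_2i+1]: it lies over the midpoint, at offset
   x_i = r_i cos θ_i along the unit normal u_i and at height z_i = r_i sin θ_i.
   The edges e_1, e_2 lie in the plane of T_2 and e_3, e_6 only touch it at a vertex of T_2,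
   so Δ_2 <> 0 forces e_4 or e_5 to cross T_2.  Reading the crossing point once in T_2 and once
   on the edge gives weights t > 0, t' >= 0 with t z_1 = t' z_j and t x_1 + t' x_j > 0 (a
   [link] between the wings), hence z_j > 0 and sin (θ_1 + θ_j) > 0 as soon as z_1 > 0.
   J(H) = (1,1) says that curl H = 1, i.e. z_1 > 0, and that every Δ_2i is non-zero.  Going
   around the hexagon this gives z_i > 0 for all i, and links every pair of wings, except when
   the two edges at the third apex are the crossing ones; then the cevians of that apex's
   triangle through the two crossing points meet in a point whose two readings link the pair. *)

From Stdlib Require Import Reals ZArith Lra Lia ClassicalEpsilon.
Open Scope R_scope.

Lemma vec3_ext (a b : vec3) : vx a = vx b -> vy a = vy b -> vz a = vz b -> a = b.
Proof. destruct a, b; simpl; intros -> -> ->; reflexivity. Qed.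

Lemma dot_vscale_l (k : R) (a b : vec3) : dot (vscale k a) b = k * dot a b.
Proof. unfold dot, vscale; simpl; ring. Qed.

Definition height (a p q r : vec3) : R := dot (vsub a q) (cross (vsub q p) (vsub r q)).

Definition crosses (a b p q r : vec3) : Prop :=
  exists l, 0 <= l <= 1 /\ in_open_triangle (vadd a (vscale l (vsub b a))) p q r.

Lemma height_p (p q r : vec3) : height p p q r = 0.
Proof. destruct p, q, r; unfold height, dot, cross, vsub; simpl; ring. Qed.

Lemma height_q (p q r : vec3) : height q p q r = 0.
Proof. destruct p, q, r; unfold height, dot, cross, vsub; simpl; ring. Qed.

Lemma height_r (p q r : vec3) : height r p q r = 0.
Proof. destruct p, q, r; unfold height, dot, cross, vsub; simpl; ring. Qed.

Lemma height_planar (a p q r : vec3) : vz p = 0 -> vz q = 0 -> vz r = 0 ->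
  height a p q r = vz a * vz (cross (vsub q p) (vsub r q)).
Proof. destruct a, p, q, r; unfold height, dot, cross, vsub; simpl; intros -> -> ->; ring. Qed.

Lemma Rdiv_sub_unit_interval (f g : R) :
  f <= 0 <= g \/ g <= 0 <= f -> f <> g -> 0 <= f / (f - g) <= 1.
Proof.
  intros hfg hne.
  assert (E : f / (f - g) * (f - g) = f) by (field; lra).
  destruct hfg; split; nra.
Qed.

Lemma crossing_point_at_start (a b : vec3) (g : R) :
  vadd a (vscale (0 / (0 - g)) (vsub b a)) = a.
Proof. apply vec3_ext; simpl; unfold Rdiv; ring. Qed.

Lemma crossing_point_at_end (a b : vec3) (f : R) :
  f <> 0 -> vadd a (vscale (f / (f - 0)) (vsub b a)) = b.
Proof. intros hf; apply vec3_ext; simpl; field; exact hf. Qed.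

Lemma edge_contrib_neq0_crosses (a b p q r : vec3) :
  edge_contrib a b p q r <> 0%Z -> crosses a b p q r.
Proof.
  unfold edge_contrib; cbv zeta; fold (height a p q r) (height b p q r).
  destruct (excluded_middle_informative _) as [Hin|]; intros Hne; [|congruence].
  exists (height a p q r / (height a p q r - height b p q r)); split; [|exact Hin].
  apply Rdiv_sub_unit_interval;
    destruct (Rlt_dec (height a p q r) 0), (Rle_dec 0 (height b p q r)),
      (Rlt_dec (height b p q r) 0); try congruence; lra.
Qed.

Lemma edge_contrib_same_side (a b p q r : vec3) :
  0 <= height a p q r -> 0 <= height b p q r -> edge_contrib a b p q r = 0%Z.
Proof.
  unfold edge_contrib; cbv zeta; fold (height a p q r) (height b p q r); intros ha hb.
  destruct (excluded_middle_informative _); [|reflexivity].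
  destruct (Rlt_dec _ 0); [lra|]. destruct (Rlt_dec _ 0); [lra|reflexivity].
Qed.

Lemma edge_contrib_from_plane (a b p q r : vec3) :
  height a p q r = 0 -> ~ in_open_triangle a p q r -> edge_contrib a b p q r = 0%Z.
Proof.
  unfold edge_contrib; cbv zeta; fold (height a p q r) (height b p q r); intros ha hout.
  rewrite ha, crossing_point_at_start.
  destruct (excluded_middle_informative _); [contradiction | reflexivity].
Qed.

Lemma edge_contrib_to_plane (a b p q r : vec3) :
  height b p q r = 0 -> ~ in_open_triangle b p q r -> edge_contrib a b p q r = 0%Z.
Proof.
  intros hb hout.
  destruct (Req_dec (height a p q r) 0) as [ha|ha].
  - apply edge_contrib_same_side; lra.
  - unfold edge_contrib; cbv zeta; fold (height a p q r) (height b p q r).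
    rewrite hb, crossing_point_at_end by exact ha.
    destruct (excluded_middle_informative _); [contradiction | reflexivity].
Qed.

Lemma edge_contrib_touch_plane (a b c p q r : vec3) :
  height a p q r < 0 -> height b p q r = 0 -> height c p q r < 0 ->
  (edge_contrib a b p q r + edge_contrib b c p q r)%Z = 0%Z.
Proof.
  intros ha hb hc; unfold edge_contrib; cbv zeta.
  fold (height a p q r) (height b p q r) (height c p q r).
  rewrite hb, crossing_point_at_end, crossing_point_at_start by lra.
  destruct (excluded_middle_informative _); [|reflexivity].
  destruct (Rlt_dec _ 0); [|lra]. destruct (Rle_dec 0 0); [|lra].
  destruct (Rlt_dec 0 0); [lra|]. destruct (Rlt_dec _ 0); [reflexivity|lra].
Qed.

Lemma base_vertices_not_in_open_triangle (A B w : vec3) :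
  0 < dot (vsub B A) (vsub B A) -> dot w (vsub B A) = 0 ->
  ~ in_open_triangle A A (vadd (midpoint A B) w) B /\
  ~ in_open_triangle B A (vadd (midpoint A B) w) B.
Proof.
  intros hAB hw.
  assert (along_base : forall al be ga, al + be + ga = 1 ->
    dot (vsub (vadd (vscale al A) (vadd (vscale be (vadd (midpoint A B) w)) (vscale ga B))) A)
        (vsub B A) = (be / 2 + ga) * dot (vsub B A) (vsub B A)).
  { intros al be ga hs. replace al with (1 - be - ga) by lra.
    transitivity ((be / 2 + ga) * dot (vsub B A) (vsub B A) + be * dot w (vsub B A)).
    - unfold dot, vsub, vadd, vscale, midpoint; simpl; field.
    - rewrite hw; field. }
  assert (dot_AA : dot (vsub A A) (vsub B A) = 0) by (unfold dot, vsub; simpl; ring).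
  split; intros (al & be & ga & hal & hbe & hga & hs & HP);
    pose proof (along_base al be ga hs) as E; rewrite <- HP in E; nra.
Qed.

(* The apex V of the wing over the base [A, B] of the planar triangle A B C, with offset x
   along the unit normal u pointing towards C and height z; for H these are r cos θ, r sin θ. *)
Definition wing (A V B C : vec3) (x z : R) : Prop :=
  vz A = 0 /\ vz B = 0 /\ vz C = 0 /\ 0 < dot (vsub B A) (vsub B A) /\
  exists u, vz u = 0 /\ dot u u = 1 /\ dot u (vsub B A) = 0 /\ 0 < dot u (vsub C A) /\
    V = vadd (midpoint A B) (vadd (vscale x u) (vscale z e_z)).

Lemma wing_apex_height {A V B C : vec3} {x z : R} : wing A V B C x z -> vz V = z.
Proof.
  intros (zA & zB & _ & _ & u & zu & _ & _ & _ & ->).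
  unfold vadd, vscale, midpoint, e_z; simpl; rewrite zA, zB, zu; ring.
Qed.

Lemma wing_base_not_in_open_triangle {A V B C : vec3} {x z : R} : wing A V B C x z ->
  ~ in_open_triangle A A V B /\ ~ in_open_triangle B A V B.
Proof.
  intros (zA & zB & _ & hAB & u & zu & _ & hu & _ & ->).
  apply base_vertices_not_in_open_triangle; [exact hAB|].
  transitivity (x * dot u (vsub B A) + z * (vz B - vz A)).
  - unfold dot, vadd, vscale, vsub, e_z; simpl; ring.
  - rewrite hu, zA, zB; ring.
Qed.

Definition link (x z x' z' : R) : Prop :=
  exists t t', 0 < t /\ 0 <= t' /\ t * z = t' * z' /\ 0 < t * x + t' * x'.

Lemma link_pos {x z x' z' : R} : link x z x' z' -> 0 < z -> 0 < z' /\ 0 < z * x' + x * z'.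
Proof.
  intros (t & t' & ht & ht' & E & K) hz.
  assert (htz : 0 < t' * z') by (rewrite <- E; apply Rmult_lt_0_compat; lra).
  assert (hz' : 0 < z') by (destruct (Rle_dec z' 0); [nra | lra]).
  split; [exact hz'|].
  assert (ht'p : 0 < t') by (destruct (Rle_dec t' 0); [nra | lra]).
  assert (Q : t' * (z * x' + x * z') = z * (t * x + t' * x')).
  { transitivity (t' * z * x' + x * (t' * z')); [ring|]. rewrite <- E; ring. }
  assert (0 < z * (t * x + t' * x')) by (apply Rmult_lt_0_compat; lra).
  destruct (Rle_dec (z * x' + x * z') 0); [nra | lra].
Qed.

Lemma link_height_nonneg {x z x' z' : R} : link x z x' z' -> 0 < z' -> 0 <= z.
Proof. intros (t & t' & ht & ht' & E & _) hz'. nra. Qed.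

(* With D = u.w <= 1, pairing the equation with u and with w gives
   (s + t) (1 - D) = a (w.p) + b (u.q) > 0. *)
Lemma inward_offsets_sum_pos (px py qx qy ux uy wx wy a b s t : R) :
  ux * ux + uy * uy = 1 -> wx * wx + wy * wy = 1 ->
  ux * px + uy * py = 0 -> wx * qx + wy * qy = 0 ->
  0 < wx * px + wy * py -> 0 < ux * qx + uy * qy -> 0 < a -> 0 < b ->
  a * px + s * ux = b * qx + t * wx -> a * py + s * uy = b * qy + t * wy ->
  0 < s + t.
Proof.
  intros nu nw up wq wp uq ha hb ex ey.
  set (D := ux * wx + uy * wy).
  assert (Eu : s = b * (ux * qx + uy * qy) + t * D).
  { transitivity (ux * (a * px + s * ux) + uy * (a * py + s * uy)).
    - transitivity (a * (ux * px + uy * py) + s * (ux * ux + uy * uy)); [|ring].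
      rewrite up, nu; ring.
    - rewrite ex, ey; unfold D; ring. }
  assert (Ew : t = a * (wx * px + wy * py) + s * D).
  { transitivity (wx * (b * qx + t * wx) + wy * (b * qy + t * wy)).
    - transitivity (b * (wx * qx + wy * qy) + t * (wx * wx + wy * wy)); [|ring].
      rewrite wq, nw; ring.
    - rewrite <- ex, <- ey; unfold D; ring. }
  assert (HD : D <= 1).
  { pose proof (Rle_0_sqr (ux - wx)); pose proof (Rle_0_sqr (uy - wy)).
    unfold Rsqr in *; unfold D; nra. }
  assert (K : (s + t) * (1 - D) = a * (wx * px + wy * py) + b * (ux * qx + uy * qy)) by nra.
  assert (0 < a * (wx * px + wy * py) + b * (ux * qx + uy * qy)) by nra.
  nra.
Qed.

Lemma cevians_meet (a b c : vec3) (l m : R) : 0 < l <= 1 -> 0 <= m < 1 ->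
  exists k n, 0 < k <= 1 /\ 0 < n <= 1 /\
    vadd (vscale (1 - k) c) (vscale k (vadd a (vscale l (vsub b a)))) =
    vadd (vscale (1 - n) a) (vscale n (vadd b (vscale m (vsub c b)))).
Proof.
  intros hl hm.
  set (D := (1 - m) + l * m).
  assert (hD : 0 < D) by (unfold D; nra).
  exists ((1 - m) / D), (l / D); split; [|split].
  - split; [apply Rdiv_lt_0_compat; lra|].
    apply Rmult_le_reg_r with D; [lra|]. field_simplify; unfold D; nra.
  - split; [apply Rdiv_lt_0_compat; lra|].
    apply Rmult_le_reg_r with D; [lra|]. field_simplify; unfold D; nra.
  - apply vec3_ext; simpl; unfold D; field; fold D; lra.
Qed.

Definition wings (G : hexagon) (x1 z1 x2 z2 x3 z3 : R) : Prop :=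
  wing (h1 G) (h2 G) (h3 G) (h5 G) x1 z1 /\
  wing (h3 G) (h4 G) (h5 G) (h1 G) x2 z2 /\
  wing (h5 G) (h6 G) (h1 G) (h3 G) x3 z3.

Definition rot (G : hexagon) : hexagon := Hex (h3 G) (h4 G) (h5 G) (h6 G) (h1 G) (h2 G).

Lemma wings_rot {G : hexagon} {x1 z1 x2 z2 x3 z3 : R} :
  wings G x1 z1 x2 z2 x3 z3 -> wings (rot G) x2 z2 x3 z3 x1 z1.
Proof. unfold wings, rot; simpl; tauto. Qed.

Lemma Delta_2_unfold (G : hexagon) : Delta G 2 =
  (edge_contrib (h1 G) (h2 G) (h1 G) (h2 G) (h3 G) +
   edge_contrib (h2 G) (h3 G) (h1 G) (h2 G) (h3 G) +
   edge_contrib (h3 G) (h4 G) (h1 G) (h2 G) (h3 G) +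
   edge_contrib (h4 G) (h5 G) (h1 G) (h2 G) (h3 G) +
   edge_contrib (h5 G) (h6 G) (h1 G) (h2 G) (h3 G) +
   edge_contrib (h6 G) (h1 G) (h1 G) (h2 G) (h3 G))%Z.
Proof. reflexivity. Qed.

Lemma Delta_4_rot (G : hexagon) : Delta G 4 = Delta (rot G) 2.
Proof. rewrite Delta_2_unfold; unfold Delta, vtx; simpl; lia. Qed.

Lemma Delta_6_rot (G : hexagon) : Delta G 6 = Delta (rot (rot G)) 2.
Proof. rewrite Delta_2_unfold; unfold Delta, vtx; simpl; lia. Qed.

Section Wings.

Context {G : hexagon} {x1 z1 x2 z2 x3 z3 : R}.
Hypothesis W : wings G x1 z1 x2 z2 x3 z3.

Lemma Delta_2_edges : Delta G 2 =
  (edge_contrib (h4 G) (h5 G) (h1 G) (h2 G) (h3 G) +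
   edge_contrib (h5 G) (h6 G) (h1 G) (h2 G) (h3 G))%Z.
Proof.
  destruct W as (W1 & _ & _).
  destruct (wing_base_not_in_open_triangle W1) as [out1 out3].
  rewrite Delta_2_unfold,
    (edge_contrib_same_side (h1 G)), (edge_contrib_same_side (h2 G) (h3 G)),
    (edge_contrib_from_plane (h3 G)), (edge_contrib_to_plane (h6 G) (h1 G));
    rewrite ?height_p, ?height_q, ?height_r; auto with real.
  lia.
Qed.

Lemma Delta_2_crossing : Delta G 2 <> 0%Z ->
  crosses (h4 G) (h5 G) (h1 G) (h2 G) (h3 G) \/ crosses (h5 G) (h6 G) (h1 G) (h2 G) (h3 G).
Proof.
  rewrite Delta_2_edges; intros D.
  destruct (Z.eq_dec (edge_contrib (h4 G) (h5 G) (h1 G) (h2 G) (h3 G)) 0) as [e|e].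
  - right; apply edge_contrib_neq0_crosses; lia.
  - left; apply edge_contrib_neq0_crosses; exact e.
Qed.

Lemma Delta_2_flat : z1 = 0 -> 0 < z2 -> 0 < z3 -> Delta G 2 = 0%Z.
Proof.
  destruct W as (W1 & W2 & W3); intros hz1 hz2 hz3.
  pose proof (wing_apex_height W1) as z2G.
  pose proof (wing_apex_height W2) as z4G.
  pose proof (wing_apex_height W3) as z6G.
  destruct W1 as (z1G & z3G & z5G & _).
  set (N := vz (cross (vsub (h2 G) (h1 G)) (vsub (h3 G) (h2 G)))).
  assert (height_T2 : forall a, height a (h1 G) (h2 G) (h3 G) = vz a * N)
    by (intros a; apply height_planar; congruence).
  rewrite Delta_2_edges.
  destruct (Rle_dec 0 N).
  - rewrite !edge_contrib_same_side; [reflexivity | ..]; rewrite height_T2; nra.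
  - apply edge_contrib_touch_plane; rewrite height_T2; nra.
Qed.

Lemma link_of_crossing_next :
  crosses (h4 G) (h5 G) (h1 G) (h2 G) (h3 G) -> link x1 z1 x2 z2.
Proof.
  destruct G as [[p1x p1y p1z] P2 [p3x p3y p3z] P4 [p5x p5y p5z] P6]; simpl in *.
  destruct W as ((z1G & z3G & z5G & _ & [ux uy uz] & zu & nu & u13 & u15 & E2) &
                 (_ & _ & _ & _ & [wx wy wz] & zw & nw & w35 & w31 & E4) & _).
  intros (l & hl & al & be & ga & hal & hbe & hga & hs & X).
  simpl in *; subst.
  unfold dot, vsub, vadd, vscale, midpoint, e_z in *; simpl in *.
  injection X as Xx Xy Xz.
  replace ga with (1 - al - be) in * by lra.
  exists be, (1 - l); split; [lra|]; split; [lra|]; split; [lra|].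
  apply (inward_offsets_sum_pos (p1x - p3x) (p1y - p3y) (p5x - p3x) (p5y - p3y)
           ux uy wx wy (al + be / 2) ((1 + l) / 2)); lra.
Qed.

Lemma link_of_crossing_prev :
  crosses (h5 G) (h6 G) (h1 G) (h2 G) (h3 G) -> link x1 z1 x3 z3.
Proof.
  destruct G as [[p1x p1y p1z] P2 [p3x p3y p3z] P4 [p5x p5y p5z] P6]; simpl in *.
  destruct W as ((z1G & z3G & z5G & _ & [ux uy uz] & zu & nu & u13 & u15 & E2) & _ &
                 (_ & _ & _ & _ & [wx wy wz] & zw & nw & w51 & w53 & E6)).
  intros (l & hl & al & be & ga & hal & hbe & hga & hs & X).
  simpl in *; subst.
  unfold dot, vsub, vadd, vscale, midpoint, e_z in *; simpl in *.
  injection X as Xx Xy Xz.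
  replace al with (1 - be - ga) in * by lra.
  exists be, l; split; [lra|]; split; [lra|]; split; [lra|].
  apply (inward_offsets_sum_pos (p3x - p1x) (p3y - p1y) (p5x - p1x) (p5y - p1y)
           ux uy wx wy (be / 2 + ga) (1 - l / 2)); lra.
Qed.

Lemma link_of_cevians : 0 < z1 -> 0 < z2 -> 0 < z3 ->
  crosses (h1 G) (h2 G) (h3 G) (h4 G) (h5 G) -> crosses (h2 G) (h3 G) (h5 G) (h6 G) (h1 G) ->
  link x2 z2 x3 z3.
Proof.
  intros hz1 hz2 hz3 (l & hl & al & be & ga & hal & hbe & hga & hs & X)
    (m & hm & al' & be' & ga' & hal' & hbe' & hga' & hs' & Y).
  assert (hlm : 0 < l /\ m < 1).
  { destruct W as (W1 & W2 & W3).
    pose proof (wing_apex_height W1) as z2G.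
    pose proof (wing_apex_height W2) as z4G.
    pose proof (wing_apex_height W3) as z6G.
    destruct W1 as (z1G & z3G & z5G & _).
    apply (f_equal vz) in X, Y; simpl in X, Y.
    rewrite z1G, z2G, z3G, z4G, z5G in X; rewrite z1G, z2G, z3G, z5G, z6G in Y.
    split; nra. }
  destruct (cevians_meet (h1 G) (h2 G) (h3 G) l m) as (k & n & hk & hn & M); [lra|lra|].
  rewrite X, Y in M; clear X Y.
  destruct G as [[p1x p1y p1z] P2 [p3x p3y p3z] P4 [p5x p5y p5z] P6]; simpl in *.
  destruct W as ((z1G & z3G & z5G & _ & [ux uy uz] & zu & nu & u13 & u15 & E2) &
                 (_ & _ & _ & _ & [vx' vy' vz'] & zv & nv & v35 & v31 & E4) &
                 (_ & _ & _ & _ & [wx wy wz] & zw & nw & w51 & w53 & E6)).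
  simpl in *; subst.
  unfold dot, vsub, vadd, vscale, midpoint, e_z in *; simpl in *.
  injection M as Mx My Mz.
  replace ga with (1 - al - be) in * by lra.
  replace al' with (1 - be' - ga') in * by lra.
  exists (k * be), (n * be'); split; [nra|]; split; [nra|]; split; [lra|].
  apply (inward_offsets_sum_pos (p3x - p5x) (p3y - p5y) (p1x - p5x) (p1y - p5y)
           vx' vy' wx wy (1 - k + k * (al + be / 2)) (1 - n + n * (be' / 2 + ga')));
    try lra; nra.
Qed.

End Wings.

Lemma wings_height_pos_of_others {G : hexagon} {x1 z1 x2 z2 x3 z3 : R} :
  wings G x1 z1 x2 z2 x3 z3 -> Delta G 2 <> 0%Z -> 0 < z2 -> 0 < z3 -> 0 < z1.
Proof.
  intros W D hz2 hz3.
  destruct (Rtotal_order z1 0) as [neg | [flat | pos]]; [exfalso | exfalso | exact pos].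
  - destruct (Delta_2_crossing W D) as [C | C].
    + pose proof (link_height_nonneg (link_of_crossing_next W C) hz2); lra.
    + pose proof (link_height_nonneg (link_of_crossing_prev W C) hz3); lra.
  - exact (D (Delta_2_flat W flat hz2 hz3)).
Qed.

Lemma wings_heights_pos {G : hexagon} {x1 z1 x2 z2 x3 z3 : R} :
  wings G x1 z1 x2 z2 x3 z3 ->
  Delta G 2 <> 0%Z -> Delta (rot G) 2 <> 0%Z -> Delta (rot (rot G)) 2 <> 0%Z ->
  0 < z1 -> 0 < z2 /\ 0 < z3.
Proof.
  intros W D2 D4 D6 hz1.
  pose proof (wings_rot W) as W2; pose proof (wings_rot W2) as W3.
  destruct (Delta_2_crossing W D2) as [C | C].
  - destruct (link_pos (link_of_crossing_next W C) hz1) as [hz2 _].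
    split; [exact hz2 | exact (wings_height_pos_of_others W3 D6 hz1 hz2)].
  - destruct (link_pos (link_of_crossing_prev W C) hz1) as [hz3 _].
    split; [exact (wings_height_pos_of_others W2 D4 hz3 hz1) | exact hz3].
Qed.

Lemma wings_pair_pos {G : hexagon} {x1 z1 x2 z2 x3 z3 : R} :
  wings G x1 z1 x2 z2 x3 z3 -> 0 < z1 -> 0 < z2 -> 0 < z3 ->
  Delta G 2 <> 0%Z -> Delta (rot G) 2 <> 0%Z -> 0 < z1 * x2 + x1 * z2.
Proof.
  intros W hz1 hz2 hz3 D2 D4.
  pose proof (wings_rot W) as W2; pose proof (wings_rot W2) as W3.
  destruct (Delta_2_crossing W D2) as [C12 | C1].
  - exact (proj2 (link_pos (link_of_crossing_next W C12) hz1)).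
  - destruct (Delta_2_crossing W2 D4) as [C2 | C21].
    + exact (proj2 (link_pos (link_of_cevians W3 hz3 hz1 hz2 C1 C2) hz1)).
    + pose proof (proj2 (link_pos (link_of_crossing_prev W2 C21) hz2)); lra.
Qed.

Lemma wings_all_pos {G : hexagon} {x1 z1 x2 z2 x3 z3 : R} :
  wings G x1 z1 x2 z2 x3 z3 ->
  Delta G 2 <> 0%Z -> Delta (rot G) 2 <> 0%Z -> Delta (rot (rot G)) 2 <> 0%Z -> 0 < z1 ->
  (0 < z1 /\ 0 < z2 /\ 0 < z3) /\
  0 < z1 * x2 + x1 * z2 /\ 0 < z1 * x3 + x1 * z3 /\ 0 < z2 * x3 + x2 * z3.
Proof.
  intros W D2 D4 D6 hz1.
  pose proof (wings_rot W) as W2; pose proof (wings_rot W2) as W3.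
  destruct (wings_heights_pos W D2 D4 D6 hz1) as [hz2 hz3].
  pose proof (wings_pair_pos W3 hz3 hz1 hz2 D6 D2).
  split; [tauto|]; split; [|split].
  - exact (wings_pair_pos W hz1 hz2 hz3 D2 D4).
  - lra.
  - exact (wings_pair_pos W2 hz2 hz3 hz1 D4 D6).
Qed.

Lemma dot_self_pos_of_cross (d c : vec3) : vz (cross d c) <> 0 -> 0 < dot d d.
Proof.
  destruct d as [dx dy dz]; unfold dot, cross; simpl; intros hdc.
  pose proof (Rle_0_sqr dx); pose proof (Rle_0_sqr dy); pose proof (Rle_0_sqr dz).
  unfold Rsqr in *.
  destruct (Req_dec dx 0) as [ex|ex]; [destruct (Req_dec dy 0) as [ey|ey]|].
  - exfalso; apply hdc; rewrite ex, ey; ring.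
  - pose proof (Rsqr_pos_lt _ ey); unfold Rsqr in *; lra.
  - pose proof (Rsqr_pos_lt _ ex); unfold Rsqr in *; lra.
Qed.

Lemma perp_toward_spec (a b o : vec3) :
  vz a = 0 -> vz b = 0 -> vz o = 0 -> vz (cross (vsub b a) (vsub o a)) <> 0 ->
  vz (perp_toward a b o) = 0 /\ dot (perp_toward a b o) (perp_toward a b o) = 1 /\
  dot (perp_toward a b o) (vsub b a) = 0 /\ 0 < dot (perp_toward a b o) (vsub o a).
Proof.
  intros za zb zo hdet.
  unfold perp_toward; cbv zeta.
  set (w := V3 (- (vy b - vy a)) (vx b - vx a) 0).
  set (det := vz (cross (vsub b a) (vsub o a))) in *.
  assert (w_base : dot w (vsub b a) = 0) by (unfold w, dot; simpl; ring).
  assert (w_apex : dot w (vsub o (midpoint a b)) = det).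
  { unfold det, w, dot, cross, midpoint; simpl; rewrite za, zb; field. }
  assert (w_apex' : dot w (vsub o a) = det) by (unfold det, w, dot, cross; simpl; rewrite za; ring).
  assert (hw : 0 < dot w w).
  { replace (dot w w) with (dot (vsub b a) (vsub b a))
      by (unfold w, dot, vsub; simpl; rewrite za, zb; ring).
    exact (dot_self_pos_of_cross _ _ hdet). }
  assert (hn : vnorm w * vnorm w = dot w w) by (apply sqrt_sqrt; lra).
  assert (hn0 : 0 < vnorm w) by (apply sqrt_lt_R0; lra).
  rewrite w_apex; set (s := if Rlt_dec 0 det then 1 else -1).
  assert (hs : s * s = 1 /\ 0 < s * det) by (unfold s; destruct (Rlt_dec 0 det); split; lra).
  destruct hs as [hs hsdet].
  set (k := s / vnorm w).
  assert (hk : k * k * dot w w = 1).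
  { unfold k; rewrite <- hn.
    replace (s / vnorm w * (s / vnorm w) * (vnorm w * vnorm w)) with (s * s) by (field; lra).
    exact hs. }
  split; [|split; [|split]].
  - simpl; ring.
  - rewrite <- hk; unfold dot; simpl; ring.
  - rewrite dot_vscale_l, w_base; ring.
  - rewrite dot_vscale_l, w_apex'; unfold k.
    replace (s / vnorm w * det) with (s * det / vnorm w) by (field; lra).
    apply Rdiv_lt_0_compat; lra.
Qed.

Lemma wing_of_apex (A V B C : vec3) (r th : R) :
  vz A = 0 -> vz B = 0 -> vz C = 0 -> vz (cross (vsub B A) (vsub C A)) <> 0 ->
  V = vadd (midpoint A B)
        (vscale r (vadd (vscale (cos th) (perp_toward A B C)) (vscale (sin th) e_z))) ->
  wing A V B C (r * cos th) (r * sin th).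
Proof.
  intros zA zB zC hdet ->.
  destruct (perp_toward_spec A B C zA zB zC hdet) as (zu & nu & ub & uc).
  do 3 (split; [assumption|]); split; [exact (dot_self_pos_of_cross _ _ hdet)|].
  exists (perp_toward A B C); do 4 (split; [assumption|]).
  f_equal; apply vec3_ext; simpl; ring.
Qed.

Definition radius (H : hexagon) (i : nat) : R := / 2 * sqrt (4 - diag H i ^ 2).

Lemma radius_pos (H : hexagon) (i : nat) : 0 < diag H i < 2 -> 0 < radius H i.
Proof. intros hd; unfold radius; apply Rmult_lt_0_compat; [lra|]; apply sqrt_lt_R0; nra. Qed.

Lemma standard_position_wings (H : hexagon) (th1 th2 th3 : R) :
  standard_position H -> is_angle H 1 th1 -> is_angle H 2 th2 -> is_angle H 3 th3 ->
  wings H (radius H 1 * cos th1) (radius H 1 * sin th1) (radius H 2 * cos th2)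
    (radius H 2 * sin th2) (radius H 3 * cos th3) (radius H 3 * sin th3).
Proof.
  intros (v1 & x3 & y3 & z3 & z5 & y5) (_ & E1) (_ & E2) (_ & E3).
  change (vtx H 1) with (h1 H) in v1; change (vtx H 3) with (h3 H) in x3, y3, z3;
  change (vtx H 5) with (h5 H) in z5, y5.
  assert (x1 : vx (h1 H) = 0) by (rewrite v1; reflexivity).
  assert (y1 : vy (h1 H) = 0) by (rewrite v1; reflexivity).
  assert (z1 : vz (h1 H) = 0) by (rewrite v1; reflexivity).
  assert (area : forall a b c, vz (cross (vsub b a) (vsub c a)) =
    (vx b - vx a) * (vy c - vy a) - (vy b - vy a) * (vx c - vx a)) by reflexivity.
  assert (0 < vx (h3 H) * vy (h5 H)) by (apply Rmult_lt_0_compat; assumption).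
  split; [|split]; apply wing_of_apex; try assumption; rewrite ?area, ?x1, ?y1, ?y3; nra.
Qed.

Lemma J_eq_1_1 (H : hexagon) : J H = (1, 1)%Z ->
  Delta H 2 <> 0%Z /\ Delta H 4 <> 0%Z /\ Delta H 6 <> 0%Z /\ curl H = 1%Z.
Proof.
  unfold J; intros E.
  assert (E1 : (Delta H 2 * Delta H 4 * Delta H 6 = 1)%Z) by congruence.
  assert (E2 : ((Delta H 2 * Delta H 4 * Delta H 6) ^ 2 * curl H = 1)%Z).
  { transitivity (Delta H 2 ^ 2 * Delta H 4 ^ 2 * Delta H 6 ^ 2 * curl H)%Z;
      [ring | exact (f_equal snd E)]. }
  rewrite E1 in E2.
  repeat split; [..| lia]; intros D; rewrite D in E1; lia.
Qed.

Lemma Rsign_eq_1 (x : R) : Rsign x = 1%Z -> 0 < x.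
Proof. unfold Rsign; destruct (Rlt_dec 0 x); [auto|]; destruct (Rlt_dec x 0); discriminate. Qed.

Lemma curl_eq_1_apex_pos (H : hexagon) :
  standard_position H -> curl H = 1%Z -> 0 < vz (h2 H).
Proof.
  intros (v1 & x3 & y3 & z3 & z5 & y5) C.
  change (vtx H 1) with (h1 H) in v1; change (vtx H 3) with (h3 H) in x3, y3, z3;
  change (vtx H 5) with (h5 H) in z5, y5.
  apply Rsign_eq_1 in C.
  change (vtx H 1) with (h1 H) in C; change (vtx H 2) with (h2 H) in C;
  change (vtx H 3) with (h3 H) in C; change (vtx H 5) with (h5 H) in C.
  replace (dot _ _) with (vx (h3 H) * vy (h5 H) * vz (h2 H)) in C
    by (rewrite v1; unfold dot, cross, vsub, origin; simpl; rewrite y3, z3, z5; ring).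
  assert (0 < vx (h3 H) * vy (h5 H)) by (apply Rmult_lt_0_compat; assumption).
  nra.
Qed.

Lemma sin_pos_in_0_PI (x : R) : 0 <= x < 2 * PI -> 0 < sin x -> 0 < x < PI.
Proof.
  intros hx hs. split.
  - destruct (Req_dec x 0) as [->|]; [rewrite sin_0 in hs; lra | lra].
  - destruct (Rtotal_order x PI) as [lt | [-> | gt]]; [exact lt | |].
    + rewrite sin_PI in hs; lra.
    + pose proof (sin_lt_0 x gt (proj2 hx)); lra.
Qed.

Lemma angle_of_height_pos (r th : R) :
  0 < r -> 0 <= th < 2 * PI -> 0 < r * sin th -> 0 < th < PI.
Proof.
  intros hr hth hz; apply sin_pos_in_0_PI; [exact hth|].
  destruct (Rle_dec (sin th) 0); [nra | lra].
Qed.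

Lemma angle_sum_lt_PI (r r' th th' : R) : 0 < r -> 0 < r' -> 0 < th < PI -> 0 < th' < PI ->
  0 < r * sin th * (r' * cos th') + r * cos th * (r' * sin th') -> th + th' < PI.
Proof.
  intros hr hr' hth hth' hs.
  replace (r * sin th * (r' * cos th') + r * cos th * (r' * sin th'))
    with (r * r' * sin (th + th')) in hs by (rewrite sin_plus; ring).
  assert (0 < r * r') by (apply Rmult_lt_0_compat; assumption).
  apply (sin_pos_in_0_PI (th + th')); [lra|].
  destruct (Rle_dec (sin (th + th')) 0); [nra | lra].
Qed.

Theorem mainTheorem6 :
  forall (H : hexagon) (th1 th2 th3 : R),
    equilateral H -> embedded H ->
    standard_position H -> aa_defined H ->
    is_angle H 1 th1 -> is_angle H 2 th2 -> is_angle H 3 th3 ->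
    J H = (1%Z, 1%Z) ->
    (0 < th1 < PI /\ 0 < th2 < PI /\ 0 < th3 < PI) /\
    th1 + th2 < PI /\ th1 + th3 < PI /\ th2 + th3 < PI.
Proof.
  intros H th1 th2 th3 _ _ Hstd [_ Hd] A1 A2 A3 HJ.
  destruct (J_eq_1_1 H HJ) as (D2 & D4 & D6 & Hcurl).
  rewrite Delta_4_rot in D4; rewrite Delta_6_rot in D6.
  pose proof (standard_position_wings H th1 th2 th3 Hstd A1 A2 A3) as W.
  assert (hz1 : 0 < radius H 1 * sin th1).
  { rewrite <- (wing_apex_height (proj1 W)). exact (curl_eq_1_apex_pos H Hstd Hcurl). }
  destruct (wings_all_pos W D2 D4 D6 hz1) as ((_ & hz2 & hz3) & P12 & P13 & P23).
  pose proof (radius_pos H 1 (Hd 1%nat ltac:(lia))) as r1.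
  pose proof (radius_pos H 2 (Hd 2%nat ltac:(lia))) as r2.
  pose proof (radius_pos H 3 (Hd 3%nat ltac:(lia))) as r3.
  pose proof (angle_of_height_pos _ _ r1 (proj1 A1) hz1) as a1.
  pose proof (angle_of_height_pos _ _ r2 (proj1 A2) hz2) as a2.
  pose proof (angle_of_height_pos _ _ r3 (proj1 A3) hz3) as a3.
  split; [tauto|]; split; [|split].
  - exact (angle_sum_lt_PI _ _ _ _ r1 r2 a1 a2 P12).
  - exact (angle_sum_lt_PI _ _ _ _ r1 r3 a1 a3 P13).
  - exact (angle_sum_lt_PI _ _ _ _ r2 r3 a2 a3 P23).
Qed.
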